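(* Let $\{F_n\}_{n\geq 0}$ be a sequence of positive integers with $F_0=1$, let $\Pi$ be the cobweb poset it determines, and for $n\ge 0$ let $\chi_n(t)=\sum_{x\in P_n}\mu(0,x)\,t^{n-r(x)}$ be the characteristic polynomial of the finite cobweb subposet $P_n$. Then $$\chi_0(t)=1,\qquad \chi_1(t)=t-F_1,$$ and for $n\geq 2$, $$\chi_n(t)=t\,\chi_{n-1}(t)+(-1)^nF_n(F_{n-1}-1)(F_{n-2}-1)\cdots(F_1-1).$$
   Context: Cobweb poset: given the sequence $\{F_n\}_{n\ge 0}$, for $s\geq 0$ let the $s$-th level be $\Phi_s=\{\langle j,s\rangle : 1\leq j\leq F_s\}$, and let $V=\bigcup_{s\geq 0}\Phi_s$. The cobweb poset is $\Pi=(V,\leq)$ where for $x=\langle s,t\rangle$, $y=\langle u,v\rangle$ one has $x\leq y$ iff ($t<v$) or ($t=v$ and $s=u$). Its rank function is $r(x)=s$ for $x\in\Phi_s$. For $n\geq 0$, $P_n$ is the set $\bigcup_{0\leq s\leq n}\Phi_s$ with the induced order; it has unique minimal element $0=\langle 1,0\rangle$. $\mu$ denotes the M\''obius function of $P_n$. *)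

From HB Require Import structures.
From mathcomp Require Import all_boot all_order all_algebra.
Set Implicit Arguments. Unset Strict Implicit. Unset Printing Implicit Defensive.
Import Order.TTheory GRing.Theory Num.Theory.
Local Open Scope ring_scope.

(* The recursion is run with fuel #|T|, which
   is enough since every strict chain in T has at most #|T| elements. *)
Fixpoint mobius_fuel (T : finType) (le : rel T) (k : nat) (x y : T) : int :=
  match k with
  | 0 => 0
  | k'.+1 =>
      if x == y then 1
      else if le x y then
        - \sum_(z : T | le x z && le z y && (z != y)) mobius_fuel le k' x z
      else 0
  end.

Definition mobius (T : finType) (le : rel T) (x y : T) : int :=
  mobius_fuel le #|T| x y.

(* The finite cobweb subposet P_n: elements <j,s> with 0 <= s <= n and
   j ranging over 'I_(F s) (0-based, i.e. j+1 in {1..F s}). *)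
Definition cobweb (F : nat -> nat) (n : nat) : finType :=
  {s : 'I_n.+1 & 'I_(F s)}.

Definition cobweb_rank (F : nat -> nat) (n : nat) (x : cobweb F n) : nat :=
  val (tag x).

Definition cobweb_le (F : nat -> nat) (n : nat) : rel (cobweb F n) :=
  fun x y => (cobweb_rank x < cobweb_rank y)%N || (x == y).

Definition cobweb_zero (F : nat -> nat) (n : nat) (h : (0 < F 0)%N)
  : cobweb F n :=
  @Tagged _ (@ord0 n) (fun s : 'I_n.+1 => 'I_(F s)) (Ordinal h).

Definition cobweb_charpoly (F : nat -> nat) (n : nat) (h : (0 < F 0)%N)
  : {poly int} :=
  \sum_(x : cobweb F n)
     (mobius (@cobweb_le F n) (cobweb_zero n h) x)%:P * 'X^(n - cobweb_rank x).

From HB Require Import structures.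
From mathcomp Require Import all_boot all_order all_algebra ring.
Import Order.TTheory GRing.Theory Num.Theory.
Set Implicit Arguments. Unset Strict Implicit. Unset Printing Implicit Defensive.
Local Open Scope ring_scope.

(* The Moebius value mu(0, x) depends only on the rank s of x: the elements
   strictly between 0 and x are exactly those of rank < s (and 0 itself), so
   m_s := mu(0, x) satisfies m_s = - sum_(r < s) F_r m_r.  Since F_0 = 1 this
   recursion is solved by m_s = (-1)^s (F_1 - 1) ... (F_(s-1) - 1).  Grouping
   chi_n by rank gives chi_n = sum_(s <= n) F_s m_s t^(n - s), and passing from
   n - 1 to n multiplies the old terms by t and adds the constant F_n m_n. *)

Section CobwebSums.
Variable F : nat -> nat.

Lemma cobweb_rank_le n (x : cobweb F n) : (cobweb_rank x <= n)%N.
Proof. by rewrite -ltnS ltn_ord. Qed.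

Lemma sum_cobweb_rank (R : nmodType) n (Q : pred nat) (g : nat -> R) :
  \sum_(x : cobweb F n | Q (cobweb_rank x)) g (cobweb_rank x)
  = \sum_(s < n.+1 | Q s) g s *+ F s.
Proof.
rewrite -(eq_bigl _ _ (fun x => andbT _)).
rewrite -(sig_big_dep (fun s : 'I_n.+1 => Q s) (fun s _ => true) (fun s _ => g s)).
by apply: eq_bigr => s _; rewrite sumr_const card_ord.
Qed.

End CobwebSums.

Section CobwebMobius.
Variable F : nat -> nat.
Hypothesis F0 : F 0 = 1%N.

Definition cobweb_mu (s : nat) : int := (-1) ^+ s * \prod_(1 <= i < s) ((F i)%:Z - 1).

Lemma sum_cobweb_mu s :
  \sum_(r < s.+1) cobweb_mu r *+ F r = (-1) ^+ s * \prod_(1 <= i < s.+1) ((F i)%:Z - 1).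
Proof.
elim: s => [|s IH]; first by rewrite big_ord1 /cobweb_mu F0 !big_geq.
rewrite big_ord_recr /= IH /cobweb_mu [in RHS]big_nat_recr //= exprS -mulr_natr natz.
by ring.
Qed.

Lemma cobweb_mu_rec s : (0 < s)%N -> cobweb_mu s = - \sum_(r < s) cobweb_mu r *+ F r.
Proof. by case: s => // s _; rewrite sum_cobweb_mu /cobweb_mu exprS mulN1r mulNr. Qed.

Variable h0 : (0 < F 0)%N.

Lemma cobweb_rank_eq0 n (z : cobweb F n) : cobweb_rank z = 0%N -> z = cobweb_zero n h0.
Proof.
case: z => s j /= rank_z; have s0 : s = ord0 by apply: val_inj.
subst s; congr Tagged; apply: val_inj => /=.
have : (nat_of_ord j < 1)%N by rewrite -[1%N]F0 ltn_ord.
by case: (nat_of_ord j).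
Qed.

Lemma cobweb_zero_lt n (z y : cobweb F n) :
  (cobweb_rank z < cobweb_rank y)%N ->
  cobweb_le (cobweb_zero n h0) z && cobweb_le z y && (z != y).
Proof.
move=> lt_zy; rewrite /cobweb_le lt_zy orTb andbT.
have -> : z != y by apply: contraTneq lt_zy => ->; rewrite ltnn.
by rewrite andbT /= lt0n; case: eqP => //= /cobweb_rank_eq0 ->.
Qed.

Lemma mobius_fuel_cobweb_zero n k (y : cobweb F n) :
  (cobweb_rank y < k)%N ->
  mobius_fuel (@cobweb_le F n) k (cobweb_zero n h0) y = cobweb_mu (cobweb_rank y).
Proof.
elim: k y => // k IH y lt_yk /=.
case: eqP => [<-|ne0y]; first by rewrite /cobweb_mu big_geq.
have rank_y_gt0 : (0 < cobweb_rank y)%N.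
  by rewrite lt0n; apply: contra_notN ne0y => /eqP /cobweb_rank_eq0 ->.
rewrite [cobweb_le _ y]/cobweb_le {1}/cobweb_rank /= rank_y_gt0 /= cobweb_mu_rec //.
congr (- _).
transitivity (\sum_(z : cobweb F n | (cobweb_rank z < cobweb_rank y)%N)
                 cobweb_mu (cobweb_rank z)).
  apply: eq_big => [z|z /andP[/andP[_]]].
    case: (ltnP (cobweb_rank z) (cobweb_rank y)) => [/cobweb_zero_lt //|ge_zy].
    by rewrite [cobweb_le z y]/cobweb_le ltnNge ge_zy /=; case: eqP; rewrite ?andbF.
  rewrite /cobweb_le => /orP[lt_zy _|/eqP -> /negP//].
  by apply: IH; apply: leq_trans lt_zy lt_yk.
rewrite (sum_cobweb_rank _ n (fun s => s < cobweb_rank y)%N cobweb_mu).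
by rewrite (big_ord_widen_cond n.+1 xpredT (fun r => cobweb_mu r *+ F r))
   // leqW ?cobweb_rank_le.
Qed.

Hypothesis Fpos : forall k, (0 < F k)%N.

Lemma card_cobweb_gt n : (n < #|cobweb F n|)%N.
Proof.
have inj : injective (fun s : 'I_n.+1 => Tagged (fun s : 'I_n.+1 => 'I_(F s)) (Ordinal (Fpos s))).
  by move=> s t /(congr1 tag).
by have := leq_card _ inj; rewrite card_ord.
Qed.

Lemma mobius_cobweb_zero n (y : cobweb F n) :
  mobius (@cobweb_le F n) (cobweb_zero n h0) y = cobweb_mu (cobweb_rank y).
Proof.
apply: mobius_fuel_cobweb_zero.
exact: leq_ltn_trans (cobweb_rank_le y) (card_cobweb_gt n).
Qed.

Definition cobweb_chi n : {poly int} :=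
  \sum_(s < n.+1) ((cobweb_mu s)%:P * 'X^(n - s)) *+ F s.

Lemma cobweb_charpolyE n : cobweb_charpoly n h0 = cobweb_chi n.
Proof.
rewrite /cobweb_charpoly.
under eq_bigr => x _ do rewrite mobius_cobweb_zero.
exact: (sum_cobweb_rank F n xpredT (fun s => (cobweb_mu s)%:P * 'X^(n - s))).
Qed.

Lemma cobweb_chi0 : cobweb_chi 0 = 1.
Proof. by rewrite /cobweb_chi big_ord1 /cobweb_mu subnn expr0 mulr1 F0 big_geq. Qed.

Lemma cobweb_chiS n : cobweb_chi n.+1 = 'X * cobweb_chi n + (cobweb_mu n.+1 *+ F n.+1)%:P.
Proof.
rewrite /cobweb_chi big_ord_recr /= subnn expr0 mulr1 polyCMn mulr_sumr; congr (_ + _).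
apply: eq_bigr => s _; rewrite mulrnAr subSn ?exprS 1?mulrCA //.
by rewrite -ltnS ltn_ord.
Qed.

End CobwebMobius.

Theorem mainTheorem4 (F : nat -> nat) (Fpos : forall k, (0 < F k)%N)
    (F0 : F 0%N = 1%N) :
  cobweb_charpoly 0 (Fpos 0%N) = 1 /\
  cobweb_charpoly 1 (Fpos 0%N) = 'X - ((F 1%N)%:Z)%:P /\
  (forall n : nat, (2 <= n)%N ->
     cobweb_charpoly n (Fpos 0%N) =
       'X * cobweb_charpoly n.-1 (Fpos 0%N)
       + ((-1) ^+ n * (F n)%:Z * \prod_(1 <= i < n) ((F i)%:Z - 1))%:P).
Proof.
have chiE n := cobweb_charpolyE F0 (Fpos 0) Fpos n.
split; first by rewrite chiE cobweb_chi0.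
split.
  rewrite chiE cobweb_chiS cobweb_chi0 // mulr1 /cobweb_mu big_geq // expr1 mulr1.
  by rewrite -mulr_natr natz mulN1r polyCN.
case=> // n _; rewrite !chiE cobweb_chiS /=.
by rewrite /cobweb_mu -mulr_natr natz mulrAC.
Qed.
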